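(* Let $K\ge2$ be an integer, let $\phi,\Phi$ be the standard normal PDF and CDF, and let $t\mapsto\tilde\alpha_t\in[0,1)$ be a differentiable (Gaussian) noise schedule with time-derivative $\tilde\alpha_t'$. Define $$\mathcal T(\tilde\alpha_t)=\frac{K}{K-1}\left[\int_{-\infty}^{\infty}\phi(z-\nu_t)\Phi^{K-1}(z)\,dz-\frac1K\right],\qquad \nu_t=\frac{\tilde\alpha_t}{\sqrt{1-\tilde\alpha_t^2}},$$ and for $n\ge0$ let $M_n=\int_{-\infty}^\infty z^n\phi(z)\Phi^{K-1}(z)\,dz$ and $I_n=\int_{-\infty}^\infty z^{n+1}\phi(z)\Phi^{K-1}(z)\,dz$. Then $$\frac{d}{dt}\mathcal T(\tilde\alpha_t)=\frac{K\,e^{-\nu_t^2/2}}{K-1}\,\frac{\tilde\alpha_t'}{(1-\tilde\alpha_t^2)^{3/2}}\sum_{n=0}^{\infty}\frac{\nu_t^n}{n!}\big[I_n-\nu_tM_n\big].$$ *)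

From Stdlib Require Import Reals Arith.
From Coquelicot Require Import Coquelicot.
Open Scope R_scope.

Definition phi (z : R) : R := exp (- z ^ 2 / 2) / sqrt (2 * PI).

Definition Phi (z : R) : R :=
  RInt_gen phi (Rbar_locally m_infty) (at_point z).

Definition RInt_R (f : R -> R) : R :=
  RInt_gen f (Rbar_locally m_infty) (Rbar_locally p_infty).

Definition nu (a : R) : R := a / sqrt (1 - a ^ 2).

Definition calT (K : nat) (a : R) : R :=
  INR K / (INR K - 1) *
  (RInt_R (fun z => phi (z - nu a) * Phi z ^ (K - 1)) - 1 / INR K).

Definition M (K n : nat) : R := RInt_R (fun z => z ^ n * phi z * Phi z ^ (K - 1)).
Definition I (K n : nat) : R := RInt_R (fun z => z ^ (n + 1) * phi z * Phi z ^ (K - 1)).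

(* For any bounded continuous [g] (here [g = Phi ^ (K - 1)]), writing
   [phi (z - v) = exp (- v^2 / 2) * phi z * exp (v z)] and expanding [exp (v z)] gives
   [RInt_R (fun z => phi (z - v) * g z) = exp (- v^2 / 2) * \sum_n M_n v^n / n!],
   where [M_n] are the Gaussian moments of [g].  Summation and integration commute
   because the Taylor remainder of [exp x] is at most [exp (2|x|) 2^-N], which the
   Gaussian weight absorbs; likewise [|r z|^n / n! <= exp (|r z|)] bounds
   [M_n r^n / n!] for every [r], so the power series has infinite radius and can be
   differentiated termwise.
   This gives the derivative [exp (- v^2 / 2) * \sum_n v^n / n! (M_(n+1) - v M_n)],
   and the chain rule with [nu' a = (1 - a^2)^(-3/2)] concludes.  All improper
   integrals are of functions bounded by [C exp (- |z|)], whose primitives converge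
   at both infinities by the Cauchy criterion. *)

From Stdlib Require Import Reals Arith Lra Lia FunctionalExtensionality.
From Coquelicot Require Import Coquelicot.
Open Scope R_scope.

Lemma filterlim_Rabs_sub_le {T : Type} {F : (T -> Prop) -> Prop} {FF : ProperFilter F}
  (f : T -> R) (l c B : R) :
  filterlim f F (locally l) -> F (fun x => Rabs (f x - c) <= B) -> Rabs (l - c) <= B.
Proof.
  intros Hl Hb.
  apply (closed_filterlim_loc f (fun y => Rabs (y - c) <= B) l Hl Hb).
  apply (closed_comp (fun y => Rabs (y - c)) (fun u => u <= B)); [|apply closed_le].
  intros y. apply (continuous_comp (fun y => y - c) Rabs).
  - apply (continuous_minus (fun y : R => y) (fun _ => c)); [apply continuous_id|apply continuous_const].
  - apply continuous_Rabs.
Qed.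

Lemma is_lim_seq_Rabs_sub_le (u e : nat -> R) (l : R) :
  (forall n, Rabs (u n - l) <= e n) -> is_lim_seq e 0 -> is_lim_seq u l.
Proof.
  intros Hb He.
  apply (is_lim_seq_le_le (fun n => l - e n) u (fun n => l + e n)).
  - intros n. specialize (Hb n). apply Rabs_le_between in Hb. lra.
  - replace (Finite l) with (Rbar_minus l 0) by (simpl; f_equal; ring).
    apply is_lim_seq_minus'; [apply is_lim_seq_const|exact He].
  - replace (Finite l) with (Rbar_plus l 0) by (simpl; f_equal; ring).
    apply is_lim_seq_plus'; [apply is_lim_seq_const|exact He].
Qed.

Lemma exp_le_exp x y : x <= y -> exp x <= exp y.
Proof. intros [H|H]; [left; apply exp_increasing; exact H|subst; lra]. Qed.

Lemma exists_exp_neg_lt (C eps : R) : 0 <= C -> 0 < eps ->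
  exists T, 0 <= T /\ C * exp (- T) < eps.
Proof.
  intros HC He. set (T := Rabs (ln ((C + 1) / eps))).
  exists T. split; [apply Rabs_pos|].
  assert (HT : exp (- T) <= eps / (C + 1)).
  { replace (eps / (C + 1)) with (exp (- ln ((C + 1) / eps))).
    - apply exp_le_exp. pose proof (Rle_abs (ln ((C + 1) / eps))). unfold T. lra.
    - rewrite exp_Ropp, exp_ln by (apply Rdiv_lt_0_compat; lra). field; lra. }
  apply Rle_lt_trans with (C * (eps / (C + 1))).
  - apply Rmult_le_compat_l; auto.
  - apply (Rmult_lt_reg_r (C + 1)); [lra|]. field_simplify; nra.
Qed.

Lemma ex_derive_continuous_R (f : R -> R) x : ex_derive f x -> continuous f x.
Proof. exact (ex_derive_continuous (K := R_AbsRing) (V := R_NormedModule) f x). Qed.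

Lemma ex_RInt_cont (f : R -> R) a b : (forall z, continuous f z) -> ex_RInt f a b.
Proof. intros Hf. apply (ex_RInt_continuous (V := R_CompleteNormedModule)); auto. Qed.

Lemma Rabs_RInt_le_primitive (f g G : R -> R) (a b : R) : a <= b ->
  (forall t, continuous f t) -> (forall t, continuous g t) ->
  (forall t, is_derive G t (g t)) ->
  (forall t, a <= t <= b -> Rabs (f t) <= g t) ->
  Rabs (RInt f a b) <= G b - G a.
Proof.
  intros Hab Hf Hg HG Hfg.
  assert (HgG : is_RInt g a b (G b - G a)).
  { apply (is_RInt_derive (V := R_CompleteNormedModule) G g); auto. }
  rewrite <- (is_RInt_unique _ _ _ _ HgG).
  eapply Rle_trans; [apply abs_RInt_le; auto using ex_RInt_cont|].
  apply RInt_le; auto.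
  - apply ex_RInt_cont. intros t. apply (continuous_comp f Rabs); auto using continuous_Rabs.
  - eexists; exact HgG.
  - intros t Ht. apply Hfg. lra.
Qed.

Lemma is_series_exp x : is_series (fun k => x ^ k / INR (fact k)) (exp x).
Proof.
  apply (is_series_ext (fun k => scal (pow_n x k) (/ INR (fact k)))); [|apply is_exp_Reals].
  intros n. rewrite pow_n_pow. reflexivity.
Qed.

Lemma pow_div_fact_le_exp x n : 0 <= x -> x ^ n / INR (fact n) <= exp x.
Proof.
  intros Hx. set (a k := x ^ k / INR (fact k)).
  assert (Ha : forall k, 0 <= a k).
  { intros k. apply Rdiv_le_0_compat; [apply pow_le; auto|apply INR_fact_lt_0]. }
  eapply Rle_trans; [|apply (exp_ge_taylor x n Hx)]. fold a.
  destruct n as [|n]; [apply Rle_refl|].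
  change (sum_f_R0 a (S n)) with (sum_f_R0 a n + a (S n)).
  pose proof (cond_pos_sum a n Ha). change (a (S n) <= sum_f_R0 a n + a (S n)). lra.
Qed.

Lemma Rabs_pow_div_fact_le x n : Rabs (x ^ n / INR (fact n)) <= exp (2 * Rabs x) * (/ 2) ^ n.
Proof.
  pose proof (pow_div_fact_le_exp (2 * Rabs x) n) as H.
  rewrite Rpow_mult_distr in H.
  assert (Hf := INR_fact_lt_0 n). assert (H2 := pow_lt 2 n ltac:(lra)).
  rewrite Rabs_div, <- RPow_abs, (Rabs_pos_eq (INR _)) by lra.
  replace (Rabs x ^ n / INR (fact n)) with (2 ^ n * Rabs x ^ n / INR (fact n) * (/ 2) ^ n)
    by (rewrite pow_inv; field; lra).
  apply Rmult_le_compat_r; [apply pow_le; lra|]. apply H. pose proof (Rabs_pos x). lra.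
Qed.

Lemma exp_taylor_remainder_le x N :
  Rabs (exp x - sum_n (fun k => x ^ k / INR (fact k)) N) <= exp (2 * Rabs x) * (/ 2) ^ N.
Proof.
  set (a k := x ^ k / INR (fact k)). set (E := exp (2 * Rabs x)).
  assert (HE : 0 < E) by apply exp_pos.
  assert (Htail : forall m,
    Rabs (sum_n a (N + m) - sum_n a N) <= E * ((/ 2) ^ N - (/ 2) ^ (N + m))).
  { induction m as [|m IH].
    - rewrite Nat.add_0_r, !Rminus_eq_0, Rabs_R0. lra.
    - rewrite Nat.add_succ_r, sum_Sn. change (plus ?u ?w) with (u + w).
      pose proof (Rabs_pow_div_fact_le x (S (N + m))) as Hk. fold (a (S (N + m))) E in Hk.
      replace (sum_n a (N + m) + a (S (N + m)) - sum_n a N)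
        with ((sum_n a (N + m) - sum_n a N) + a (S (N + m))) by ring.
      eapply Rle_trans; [apply Rabs_triang|]. simpl in Hk |- *. lra. }
  apply (filterlim_Rabs_sub_le (sum_n a) (exp x) (sum_n a N)); [apply is_series_exp|].
  exists N. intros n Hn. replace n with (N + (n - N))%nat by lia.
  eapply Rle_trans; [apply Htail|].
  assert (0 <= (/ 2) ^ (N + (n - N))) by (apply pow_le; lra). nra.
Qed.

Lemma continuous_sum_n (f : nat -> R -> R) N z : (forall k, continuous (f k) z) ->
  continuous (fun x => sum_n (fun k => f k x) N) z.
Proof.
  intros Hf. induction N as [|N IH].
  - apply (continuous_ext (f 0%nat)); [intros x; rewrite sum_O; reflexivity|apply Hf].
  - apply (continuous_ext (fun x => sum_n (fun k => f k x) N + f (S N) x)).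
    + intros x. rewrite sum_Sn. reflexivity.
    + exact (continuous_plus _ _ z IH (Hf (S N))).
Qed.

Lemma is_RInt_gen_sum_n {Fa Fb : (R -> Prop) -> Prop} {FFa : Filter Fa} {FFb : Filter Fb}
  (f : nat -> R -> R) (l : nat -> R) N :
  (forall k, is_RInt_gen (f k) Fa Fb (l k)) ->
  is_RInt_gen (fun z => sum_n (fun k => f k z) N) Fa Fb (sum_n l N).
Proof.
  intros Hf. induction N as [|N IH].
  - rewrite sum_O. apply (is_RInt_gen_ext (f 0%nat)); [|apply Hf].
    apply filter_forall. intros ab x _. rewrite sum_O. reflexivity.
  - rewrite sum_Sn. apply (is_RInt_gen_ext (fun z => plus (sum_n (fun k => f k z) N) (f (S N) z))).
    + apply filter_forall. intros ab x _. rewrite sum_Sn. reflexivity.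
    + exact (is_RInt_gen_plus _ _ _ _ IH (Hf (S N))).
Qed.

(** * Integrals of exponentially decaying functions *)

Section ExpDominated.

Variables (f : R -> R) (C : R).
Hypothesis f_cont : forall z, continuous f z.
Hypothesis f_le : forall z, Rabs (f z) <= C * exp (- Rabs z).

Let F x := RInt f 0 x.

Lemma exp_bound_const_ge0 : 0 <= C.
Proof.
  pose proof (f_le 0). pose proof (Rabs_pos (f 0)). pose proof (exp_pos (- Rabs 0)). nra.
Qed.

Lemma Rabs_RInt_le_exp_pos a b : 0 <= a <= b -> Rabs (RInt f a b) <= C * exp (- a).
Proof.
  intros Hab. pose proof (exp_pos (- b)). pose proof exp_bound_const_ge0.
  eapply Rle_trans.
  - apply (Rabs_RInt_le_primitive f (fun t => C * exp (- t)) (fun t => - C * exp (- t))); auto; try lra.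
    + intros t. apply ex_derive_continuous_R. auto_derive; auto.
    + intros t. auto_derive; auto. ring.
    + intros t Ht. rewrite <- (Rabs_pos_eq t) at 2 by lra. apply f_le.
  - nra.
Qed.

Lemma Rabs_RInt_le_exp_neg a b : a <= b <= 0 -> Rabs (RInt f a b) <= C * exp b.
Proof.
  intros Hab. pose proof (exp_pos a). pose proof exp_bound_const_ge0.
  eapply Rle_trans.
  - apply (Rabs_RInt_le_primitive f (fun t => C * exp t) (fun t => C * exp t)); auto; try lra.
    + intros t. apply ex_derive_continuous_R. auto_derive; auto.
    + intros t. auto_derive; auto. ring.
    + intros t Ht. rewrite <- (Ropp_involutive t) at 2. rewrite <- (Rabs_left1 t) by lra. apply f_le.
  - nra.
Qed.

Lemma RInt_swap_Rabs a b : Rabs (RInt f b a) = Rabs (RInt f a b).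
Proof.
  rewrite <- (opp_RInt_swap f a b) by auto using ex_RInt_cont. apply Rabs_Ropp.
Qed.

Lemma RInt_sub_primitive a b : F b - F a = RInt f a b.
Proof.
  unfold F. rewrite <- (RInt_Chasles f 0 a b) by auto using ex_RInt_cont.
  unfold plus; simpl; ring.
Qed.

Lemma Rabs_primitive_le x : Rabs (F x) <= C.
Proof.
  destruct (Rle_dec 0 x) as [Hx|Hx].
  - eapply Rle_trans; [apply Rabs_RInt_le_exp_pos; lra|]. rewrite Ropp_0, exp_0; lra.
  - unfold F. rewrite <- RInt_swap_Rabs.
    eapply Rle_trans; [apply Rabs_RInt_le_exp_neg; lra|]. rewrite exp_0; lra.
Qed.

Lemma is_derive_primitive x : is_derive F x (f x).
Proof.
  apply (is_derive_RInt (V := R_NormedModule) f F 0 x); auto.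
  apply filter_forall. intros y. apply (RInt_correct (V := R_CompleteNormedModule)).
  auto using ex_RInt_cont.
Qed.

Lemma Rabs_RInt_le_tail_pos T a b : 0 <= T -> T <= a -> T <= b ->
  Rabs (RInt f a b) <= C * exp (- T).
Proof.
  intros HT Ha Hb. pose proof exp_bound_const_ge0.
  destruct (Rle_dec a b); [|rewrite <- RInt_swap_Rabs];
    (eapply Rle_trans; [apply Rabs_RInt_le_exp_pos; lra|]);
    apply Rmult_le_compat_l, exp_le_exp; lra.
Qed.

Lemma Rabs_RInt_le_tail_neg T a b : 0 <= T -> a <= - T -> b <= - T ->
  Rabs (RInt f a b) <= C * exp (- T).
Proof.
  intros HT Ha Hb. pose proof exp_bound_const_ge0.
  destruct (Rle_dec a b); [|rewrite <- RInt_swap_Rabs];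
    (eapply Rle_trans; [apply Rabs_RInt_le_exp_neg; lra|]);
    apply Rmult_le_compat_l, exp_le_exp; lra.
Qed.

Lemma primitive_cvg_p_infty : exists lp, filterlim F (Rbar_locally p_infty) (locally lp).
Proof.
  apply (filterlim_locally_cauchy (U := R_CompleteSpace)). intros eps.
  destruct (exists_exp_neg_lt C eps exp_bound_const_ge0 (cond_pos eps)) as [T [HT HTe]].
  exists (fun x => T < x). split; [exists T; auto|].
  intros u v Hu Hv. change (Rabs (F v - F u) < eps). rewrite RInt_sub_primitive.
  eapply Rle_lt_trans; [apply (Rabs_RInt_le_tail_pos T)|]; auto; lra.
Qed.

Lemma primitive_cvg_m_infty : exists lm, filterlim F (Rbar_locally m_infty) (locally lm).
Proof.
  apply (filterlim_locally_cauchy (U := R_CompleteSpace)). intros eps.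
  destruct (exists_exp_neg_lt C eps exp_bound_const_ge0 (cond_pos eps)) as [T [HT HTe]].
  exists (fun x => x < - T). split; [exists (- T); auto|].
  intros u v Hu Hv. change (Rabs (F v - F u) < eps). rewrite RInt_sub_primitive.
  eapply Rle_lt_trans; [apply (Rabs_RInt_le_tail_neg T)|]; auto; lra.
Qed.

Lemma is_RInt_gen_primitive {Fa Fb : (R -> Prop) -> Prop} {FFa : Filter Fa} {FFb : Filter Fb}
  (la lb : R) :
  filterlim F Fa (locally la) -> filterlim F Fb (locally lb) -> is_RInt_gen f Fa Fb (lb - la).
Proof.
  intros Ha Hb. assert (HDF : forall x, Derive F x = f x).
  { intros x. apply is_derive_unique, is_derive_primitive. }
  apply (is_RInt_gen_ext (Derive F)).
  { apply filter_forall. intros ab x _. apply HDF. }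
  apply is_RInt_gen_Derive; [| |exact Ha|exact Hb]; apply filter_forall; intros ab x _.
  - eexists; apply is_derive_primitive.
  - apply (continuous_ext f); auto.
Qed.

Lemma primitive_limit_le {G : (R -> Prop) -> Prop} {FG : ProperFilter G} l :
  filterlim F G (locally l) -> Rabs l <= C.
Proof.
  intros Hl. rewrite <- (Rminus_0_r l). apply (filterlim_Rabs_sub_le F l 0 C Hl).
  apply filter_forall. intros x. rewrite Rminus_0_r. apply Rabs_primitive_le.
Qed.

Lemma RInt_R_correct_bound :
  is_RInt_gen f (Rbar_locally m_infty) (Rbar_locally p_infty) (RInt_R f) /\
  Rabs (RInt_R f) <= 2 * C.
Proof.
  destruct primitive_cvg_m_infty as [lm Hm], primitive_cvg_p_infty as [lp Hp].
  assert (H := is_RInt_gen_primitive lm lp Hm Hp).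
  unfold RInt_R. rewrite (is_RInt_gen_unique _ _ H). split; auto.
  pose proof (primitive_limit_le lm Hm). pose proof (primitive_limit_le lp Hp).
  unfold Rminus. eapply Rle_trans; [apply Rabs_triang|]. rewrite Rabs_Ropp. lra.
Qed.

Lemma RInt_gen_m_infty_primitive : exists lm, forall z,
  RInt_gen f (Rbar_locally m_infty) (at_point z) = F z - lm /\ Rabs (F z - lm) <= 2 * C.
Proof.
  destruct primitive_cvg_m_infty as [lm Hm]. exists lm. intros z.
  assert (Hz : filterlim F (at_point z) (locally (F z))).
  { intros P HP. exact (locally_singleton _ _ HP). }
  split; [apply (is_RInt_gen_unique _ _ (is_RInt_gen_primitive lm _ Hm Hz))|].
  pose proof (primitive_limit_le lm Hm). pose proof (Rabs_primitive_le z).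
  unfold Rminus. eapply Rle_trans; [apply Rabs_triang|]. rewrite Rabs_Ropp. lra.
Qed.

End ExpDominated.

Lemma sqrt_2PI_pos : 0 < sqrt (2 * PI).
Proof. apply sqrt_lt_R0. pose proof PI_RGT_0. lra. Qed.

Lemma phi_pos z : 0 < phi z.
Proof. apply Rdiv_lt_0_compat; [apply exp_pos|apply sqrt_2PI_pos]. Qed.

Lemma phi_continuous z : continuous phi z.
Proof. apply ex_derive_continuous_R. unfold phi. auto_derive. auto. Qed.

Definition gauss_tail_const (c : R) : R := exp ((c + 1) ^ 2 / 2) / sqrt (2 * PI).

(* Completing the square: [- z^2 / 2 + c |z| <= (c + 1)^2 / 2 - |z|]. *)
Lemma phi_mul_exp_le c z : 0 <= c ->
  phi z * exp (c * Rabs z) <= gauss_tail_const c * exp (- Rabs z).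
Proof.
  intros Hc. unfold phi, gauss_tail_const, Rdiv.
  rewrite (Rmult_comm (exp (- z ^ 2 * / 2))), (Rmult_comm (exp ((c + 1) ^ 2 * / 2))), !Rmult_assoc.
  apply Rmult_le_compat_l; [left; apply Rinv_0_lt_compat, sqrt_2PI_pos|].
  rewrite <- !exp_plus. apply exp_le_exp.
  rewrite <- (pow2_abs z). pose proof (Rabs_pos z). pose proof (pow2_ge_0 (Rabs z - (c + 1))). nra.
Qed.

Lemma Phi_continuous_bounded : exists B, forall z, continuous Phi z /\ Rabs (Phi z) <= B.
Proof.
  assert (Hphi : forall z, Rabs (phi z) <= gauss_tail_const 0 * exp (- Rabs z)).
  { intros z. rewrite Rabs_pos_eq by (left; apply phi_pos).
    pose proof (phi_mul_exp_le 0 z (Rle_refl 0)) as H.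
    rewrite Rmult_0_l, exp_0, Rmult_1_r in H. exact H. }
  destruct (RInt_gen_m_infty_primitive phi _ phi_continuous Hphi) as [lm Hlm].
  exists (2 * gauss_tail_const 0). intros z. unfold Phi. rewrite (proj1 (Hlm z)).
  split; [|apply Hlm].
  apply (continuous_ext (fun x => RInt phi 0 x - lm)); [intros x; symmetry; apply Hlm|].
  apply (continuous_minus (fun x => RInt phi 0 x) (fun _ => lm)); [|apply continuous_const].
  apply ex_derive_continuous_R. eexists. apply is_derive_primitive, phi_continuous.
Qed.

Lemma Phi_pow_continuous_bounded m : exists B,
  (forall z, continuous (fun x => Phi x ^ m) z) /\ forall z, Rabs (Phi z ^ m) <= B.
Proof.
  destruct Phi_continuous_bounded as [B HB]. exists (B ^ m). split; intros z.
  - apply (continuous_comp Phi (fun x => x ^ m)); [apply HB|].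
    apply ex_derive_continuous_R. auto_derive. auto.
  - rewrite <- RPow_abs. apply pow_incr. split; [apply Rabs_pos|apply HB].
Qed.

(** * Gaussian moments of a bounded continuous function *)

Section GaussianMoments.

Variables (g : R -> R) (B : R).
Hypothesis g_cont : forall z, continuous g z.
Hypothesis g_le : forall z, Rabs (g z) <= B.

Definition moment (n : nat) : R := RInt_R (fun z => z ^ n * phi z * g z).

Definition moment_coef (n : nat) : R := moment n / INR (fact n).

Lemma bound_ge0 : 0 <= B.
Proof. pose proof (g_le 0). pose proof (Rabs_pos (g 0)). lra. Qed.

Lemma moment_integrand_continuous n z : continuous (fun x => x ^ n * phi x * g x) z.
Proof.
  apply (continuous_mult (fun x => x ^ n * phi x) g); auto.
  apply ex_derive_continuous_R. unfold phi. auto_derive. auto.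
Qed.

Lemma Rabs_moment_term_le r n z :
  Rabs (r ^ n / INR (fact n) * (z ^ n * phi z * g z)) <=
  B * gauss_tail_const (Rabs r) * exp (- Rabs z).
Proof.
  assert (Hphi := phi_pos z). assert (Hg := g_le z). assert (HB := bound_ge0).
  assert (Hpow : Rabs ((r * z) ^ n / INR (fact n)) <= exp (Rabs r * Rabs z)).
  { rewrite <- Rabs_mult, Rabs_div, <- RPow_abs, (Rabs_pos_eq (INR _))
      by (apply pos_INR || apply INR_fact_neq_0).
    apply pow_div_fact_le_exp, Rabs_pos. }
  replace (r ^ n / INR (fact n) * (z ^ n * phi z * g z))
    with ((r * z) ^ n / INR (fact n) * phi z * g z)
    by (rewrite Rpow_mult_distr; field; apply INR_fact_neq_0).
  rewrite !Rabs_mult, (Rabs_pos_eq (phi z)) by lra.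
  apply Rle_trans with (exp (Rabs r * Rabs z) * phi z * B).
  - apply Rmult_le_compat; try apply Rabs_pos; auto.
    + apply Rmult_le_pos; [apply Rabs_pos|lra].
    + apply Rmult_le_compat_r; lra.
  - rewrite (Rmult_comm (exp _)), (Rmult_comm _ B), !Rmult_assoc.
    apply Rmult_le_compat_l; auto. apply phi_mul_exp_le, Rabs_pos.
Qed.

Lemma is_RInt_gen_moment n :
  is_RInt_gen (fun z => z ^ n * phi z * g z) (Rbar_locally m_infty) (Rbar_locally p_infty)
    (moment n).
Proof.
  apply (RInt_R_correct_bound _ (INR (fact n) * (B * gauss_tail_const (Rabs 1)))).
  - apply moment_integrand_continuous.
  - intros z. assert (Hf := INR_fact_lt_0 n).
    pose proof (Rabs_moment_term_le 1 n z) as H.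
    rewrite pow1, Rabs_mult, (Rabs_pos_eq (1 / _)) in H
      by (apply Rlt_le, Rdiv_lt_0_compat; lra).
    apply (Rmult_le_compat_l (INR (fact n))) in H; [|lra].
    replace (INR (fact n) * (1 / INR (fact n) * Rabs (z ^ n * phi z * g z)))
      with (Rabs (z ^ n * phi z * g z)) in H by (field; lra).
    eapply Rle_trans; [exact H|right; ring].
Qed.

Lemma is_RInt_gen_moment_term v n :
  is_RInt_gen (fun z => v ^ n / INR (fact n) * (z ^ n * phi z * g z))
    (Rbar_locally m_infty) (Rbar_locally p_infty) (moment_coef n * v ^ n).
Proof.
  replace (moment_coef n * v ^ n) with (v ^ n / INR (fact n) * moment n)
    by (unfold moment_coef; field; apply INR_fact_neq_0).
  apply (is_RInt_gen_scal (fun z => z ^ n * phi z * g z)), is_RInt_gen_moment.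
Qed.

Lemma Rabs_moment_coef_le r n :
  Rabs (moment_coef n * r ^ n) <= 2 * (B * gauss_tail_const (Rabs r)).
Proof.
  destruct (RInt_R_correct_bound (fun z => r ^ n / INR (fact n) * (z ^ n * phi z * g z))
              (B * gauss_tail_const (Rabs r))) as [_ Hle].
  - intros z. apply (continuous_mult (fun _ => r ^ n / INR (fact n)) (fun z => z ^ n * phi z * g z)).
    + apply continuous_const.
    + apply moment_integrand_continuous.
  - apply Rabs_moment_term_le.
  - unfold RInt_R in Hle. rewrite (is_RInt_gen_unique _ _ (is_RInt_gen_moment_term r n)) in Hle.
    exact Hle.
Qed.

Lemma CV_radius_moment_coef x : Rbar_lt (Rabs x) (CV_radius moment_coef).
Proof.
  destruct (CV_radius_bounded moment_coef) as [Hub _].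
  assert (H : Rbar_le (Rabs x + 1) (CV_radius moment_coef)).
  { apply Hub. eexists. apply Rabs_moment_coef_le. }
  destruct (CV_radius moment_coef); simpl in *; auto; lra.
Qed.

Lemma tilted_integrand_continuous v z : continuous (fun x => phi x * exp (v * x) * g x) z.
Proof.
  apply (continuous_mult (fun x => phi x * exp (v * x)) g); auto.
  apply ex_derive_continuous_R. unfold phi. auto_derive. auto.
Qed.

Lemma Rabs_tilted_integrand_le v z :
  Rabs (phi z * exp (v * z) * g z) <= B * gauss_tail_const (Rabs v) * exp (- Rabs z).
Proof.
  assert (Hphi := phi_pos z). assert (Hg := g_le z). assert (HB := bound_ge0).
  assert (Hexp : exp (v * z) <= exp (Rabs v * Rabs z)).
  { apply exp_le_exp. rewrite <- Rabs_mult. apply Rle_abs. }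
  pose proof (phi_mul_exp_le (Rabs v) z (Rabs_pos v)). pose proof (exp_pos (v * z)).
  rewrite !Rabs_mult, (Rabs_pos_eq (phi z)), (Rabs_pos_eq (exp _)) by lra.
  apply Rle_trans with (B * (phi z * exp (Rabs v * Rabs z))).
  - rewrite Rmult_comm. apply Rmult_le_compat; auto using Rabs_pos.
    + apply Rmult_le_pos; lra.
    + apply Rmult_le_compat_l; lra.
  - rewrite Rmult_assoc. apply Rmult_le_compat_l; auto.
Qed.

Lemma partial_moment_sum_eq v N z :
  sum_n (fun k => v ^ k / INR (fact k) * (z ^ k * phi z * g z)) N =
  sum_n (fun k => (v * z) ^ k / INR (fact k)) N * (phi z * g z).
Proof.
  rewrite <- (sum_n_mult_r (K := R_AbsRing)). apply sum_n_ext. intros k.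
  rewrite Rpow_mult_distr. unfold mult; simpl. field. apply INR_fact_neq_0.
Qed.

Lemma Rabs_tilted_sub_partial_le v N z :
  Rabs (phi z * exp (v * z) * g z - sum_n (fun k => v ^ k / INR (fact k) * (z ^ k * phi z * g z)) N)
  <= B * (/ 2) ^ N * gauss_tail_const (2 * Rabs v) * exp (- Rabs z).
Proof.
  assert (Hphi := phi_pos z). assert (Hg := g_le z). assert (HB := bound_ge0).
  assert (H2N : 0 <= (/ 2) ^ N) by (apply pow_le; lra).
  pose proof (exp_taylor_remainder_le (v * z) N) as Hrem.
  rewrite Rabs_mult in Hrem.
  pose proof (phi_mul_exp_le (2 * Rabs v) z ltac:(pose proof (Rabs_pos v); lra)).
  rewrite partial_moment_sum_eq.
  replace (phi z * exp (v * z) * g z - _ * (phi z * g z))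
    with (phi z * g z * (exp (v * z) - sum_n (fun k => (v * z) ^ k / INR (fact k)) N)) by ring.
  rewrite !Rabs_mult, (Rabs_pos_eq (phi z)) by lra.
  apply Rle_trans with (phi z * B * (exp (2 * Rabs v * Rabs z) * (/ 2) ^ N)).
  - apply Rmult_le_compat; try apply Rabs_pos.
    + apply Rmult_le_pos; [lra|apply Rabs_pos].
    + apply Rmult_le_compat_l; lra.
    + rewrite Rmult_assoc. exact Hrem.
  - replace (phi z * B * (exp (2 * Rabs v * Rabs z) * (/ 2) ^ N))
      with (B * (/ 2) ^ N * (phi z * exp (2 * Rabs v * Rabs z))) by ring.
    rewrite !(Rmult_assoc (B * _)). apply Rmult_le_compat_l; [nra|auto].
Qed.

Lemma is_series_moment_coef v :
  is_series (fun n => moment_coef n * v ^ n) (RInt_R (fun z => phi z * exp (v * z) * g z)).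
Proof.
  set (S N z := sum_n (fun k => v ^ k / INR (fact k) * (z ^ k * phi z * g z)) N).
  set (D := B * gauss_tail_const (2 * Rabs v)).
  assert (Htilt := RInt_R_correct_bound _ _ (tilted_integrand_continuous v) (Rabs_tilted_integrand_le v)).
  assert (Hbound : forall N,
    Rabs (sum_n (fun n => moment_coef n * v ^ n) N - RInt_R (fun z => phi z * exp (v * z) * g z))
    <= 2 * D * (/ 2) ^ N).
  { intros N. rewrite Rabs_minus_sym.
    destruct (RInt_R_correct_bound (fun z => phi z * exp (v * z) * g z - S N z)
                (B * (/ 2) ^ N * gauss_tail_const (2 * Rabs v))) as [_ Hle].
    - intros z. apply (continuous_minus (fun x => phi x * exp (v * x) * g x) (S N)).
      + apply tilted_integrand_continuous.
      + apply (continuous_sum_n (fun k x => v ^ k / INR (fact k) * (x ^ k * phi x * g x))).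
        intros k. apply (continuous_mult (fun _ => v ^ k / INR (fact k)) (fun x => x ^ k * phi x * g x)).
        * apply continuous_const.
        * apply moment_integrand_continuous.
    - apply Rabs_tilted_sub_partial_le.
    - assert (Hrem : is_RInt_gen (fun z => phi z * exp (v * z) * g z - S N z)
        (Rbar_locally m_infty) (Rbar_locally p_infty)
        (RInt_R (fun z => phi z * exp (v * z) * g z) - sum_n (fun n => moment_coef n * v ^ n) N)).
      { exact (is_RInt_gen_minus _ _ _ _
          (proj1 Htilt) (is_RInt_gen_sum_n _ _ N (is_RInt_gen_moment_term v))). }
      unfold RInt_R in Hle at 1. rewrite (is_RInt_gen_unique _ _ Hrem) in Hle.
      unfold D. eapply Rle_trans; [exact Hle|right; ring]. }
  apply (is_lim_seq_Rabs_sub_le _ _ _ Hbound).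
  replace (Finite 0) with (Rbar_mult (2 * D) 0) by (simpl; f_equal; ring).
  apply is_lim_seq_scal_l, is_lim_seq_geom. rewrite Rabs_pos_eq; lra.
Qed.

Lemma RInt_R_phi_shift v :
  RInt_R (fun z => phi (z - v) * g z) = exp (- v ^ 2 / 2) * PSeries moment_coef v.
Proof.
  unfold PSeries. rewrite (is_series_unique _ _ (is_series_moment_coef v)).
  assert (Hf : (fun z => phi (z - v) * g z) =
               (fun z => exp (- v ^ 2 / 2) * (phi z * exp (v * z) * g z))).
  { apply functional_extensionality. intros z. unfold phi.
    replace (- (z - v) ^ 2 / 2) with (- v ^ 2 / 2 + (- z ^ 2 / 2 + v * z)) by field.
    rewrite !exp_plus. field. apply Rgt_not_eq, sqrt_2PI_pos. }
  rewrite Hf. unfold RInt_R. apply is_RInt_gen_unique.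
  exact (is_RInt_gen_scal _ (exp (- v ^ 2 / 2)) _
    (proj1 (RInt_R_correct_bound _ _ (tilted_integrand_continuous v) (Rabs_tilted_integrand_le v)))).
Qed.

Lemma is_series_moment_derivative_terms v :
  is_series (fun n => v ^ n / INR (fact n) * (moment (n + 1) - v * moment n))
    (PSeries (PS_derive moment_coef) v - v * PSeries moment_coef v).
Proof.
  assert (Hv := CV_radius_moment_coef v).
  assert (HP : is_series (fun n => moment_coef n * v ^ n) (PSeries moment_coef v)).
  { apply Series_correct, ex_pseries_R, CV_radius_inside, Hv. }
  assert (HP' : is_series (fun n => PS_derive moment_coef n * v ^ n)
                  (PSeries (PS_derive moment_coef) v)).
  { apply Series_correct, ex_pseries_R, CV_radius_inside. rewrite CV_radius_derive. exact Hv. }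
  eapply is_series_ext; [|exact (is_series_minus _ _ _ _ HP' (is_series_scal_l v _ _ HP))].
  intros n. unfold PS_derive, moment_coef. rewrite Nat.add_1_r, fact_simpl, mult_INR.
  rewrite S_INR. pose proof (INR_fact_neq_0 n). pose proof (pos_INR n).
  unfold minus, plus, opp, scal; simpl. unfold mult; simpl. field. lra.
Qed.

Lemma is_derive_RInt_R_phi_shift v :
  let terms := fun n => v ^ n / INR (fact n) * (moment (n + 1) - v * moment n) in
  ex_series terms /\
  is_derive (fun u => RInt_R (fun z => phi (z - u) * g z)) v (exp (- v ^ 2 / 2) * Series terms).
Proof.
  intros terms.
  assert (Hterms : is_series terms (PSeries (PS_derive moment_coef) v - v * PSeries moment_coef v))
    by apply is_series_moment_derivative_terms.
  split; [eexists; exact Hterms|]. rewrite (is_series_unique _ _ Hterms).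
  apply (is_derive_ext (fun u => exp (- u ^ 2 / 2) * PSeries moment_coef u)).
  { intros u. symmetry. apply RInt_R_phi_shift. }
  replace (exp (- v ^ 2 / 2) * _) with
    ((- v * exp (- v ^ 2 / 2)) * PSeries moment_coef v +
     exp (- v ^ 2 / 2) * PSeries (PS_derive moment_coef) v) by ring.
  apply (is_derive_mult (fun u => exp (- u ^ 2 / 2)) (PSeries moment_coef)).
  - assert (Hgauss : is_derive (fun u => exp (- u ^ 2 / 2)) v (- v * exp (- v ^ 2 / 2))).
    { auto_derive; auto. replace (- (v * (v * 1)) * / 2) with (- v ^ 2 / 2) by field. lra. }
    exact Hgauss.
  - exact (is_derive_PSeries _ _ (CV_radius_moment_coef v)).
  - intros; apply Rmult_comm.
Qed.

End GaussianMoments.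

Lemma Rpower_3_2 y : 0 < y -> Rpower y (3 / 2) = y * sqrt y.
Proof.
  intros Hy. replace (3 / 2) with (1 + / 2) by field.
  rewrite Rpower_plus, Rpower_1, Rpower_sqrt; auto.
Qed.

Lemma is_derive_nu a : -1 < a < 1 -> is_derive nu a (1 / Rpower (1 - a ^ 2) (3 / 2)).
Proof.
  intros Ha. assert (Hp : 0 < 1 - a ^ 2) by nra.
  rewrite Rpower_3_2 by exact Hp.
  assert (Hs := sqrt_lt_R0 _ Hp). assert (Hss := sqrt_sqrt _ (Rlt_le _ _ Hp)).
  unfold nu. auto_derive.
  - replace (1 + - (a * (a * 1))) with (1 - a ^ 2) by ring. lra.
  - replace (1 + - (a * (a * 1))) with (1 - a ^ 2) by ring.
    set (s := sqrt (1 - a ^ 2)) in *. field_simplify_eq; [nra|lra].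
Qed.

Theorem proposition8 (K : nat) (alpha alpha' : R -> R)
  (hK : (2 <= K)%nat)
  (hrange : forall s, 0 <= alpha s < 1)
  (hder : forall s, is_derive alpha s (alpha' s)) :
  forall t : R,
    let nt := nu (alpha t) in
    let terms := fun n : nat =>
      nt ^ n / INR (fact n) * (I K n - nt * M K n) in
    ex_series terms /\
    is_derive (fun s => calT K (alpha s)) t
      (INR K * exp (- nt ^ 2 / 2) / (INR K - 1) *
       (alpha' t / Rpower (1 - alpha t ^ 2) (3 / 2)) * Series terms).
Proof.
  intros t nt terms.
  destruct (Phi_pow_continuous_bounded (K - 1)) as [B [g_cont g_le]].
  destruct (is_derive_RInt_R_phi_shift _ B g_cont g_le nt) as [Hex Hshift].
  split; [exact Hex|].
  assert (Hnu : is_derive (fun s => nu (alpha s)) t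
                  (alpha' t * (1 / Rpower (1 - alpha t ^ 2) (3 / 2)))).
  { apply (is_derive_comp nu alpha); [apply is_derive_nu; pose proof (hrange t); lra|apply hder]. }
  assert (HK : 2 <= INR K) by (apply (le_INR 2); exact hK).
  assert (HP : 0 < Rpower (1 - alpha t ^ 2) (3 / 2)) by apply exp_pos.
  set (P := Rpower (1 - alpha t ^ 2) (3 / 2)) in *. set (S := Series terms).
  set (G u := RInt_R (fun z => phi (z - u) * Phi z ^ (K - 1))) in Hshift.
  apply (is_derive_ext (fun s => INR K / (INR K - 1) * (G (nu (alpha s)) - 1 / INR K)));
    [reflexivity|].
  replace (INR K * _ / _ * _ * _) with
    (INR K / (INR K - 1) * (alpha' t * (1 / P) * (exp (- nt ^ 2 / 2) * S) - 0))
    by (field; lra).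
  apply (is_derive_scal (fun s => G (nu (alpha s)) - 1 / INR K)).
  apply (is_derive_minus _ (fun _ => 1 / INR K)).
  - exact (is_derive_comp G (fun s => nu (alpha s)) t _ _ Hshift Hnu).
  - exact (is_derive_const (K := R_AbsRing) (V := R_NormedModule) (1 / INR K) t).
Qed.
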